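(* Let $T\subseteq\mathcal T_d$ be any subregion and let $U$ be the monomial subregion of $T$ associated to a monomial $x^ay^bz^c$ of degree less than $d$. If $U$ is tileable by lozenges, then $T$ is tileable if and only if $T\setminus U$ is tileable. Moreover, each lozenge tiling of $T$ is obtained by combining a lozenge tiling of $T\setminus U$ and a lozenge tiling of $U$.
   Context: For $d\ge1$, $\mathcal T_d$ is an equilateral triangle of side length $d$ (horizontal bottom side) subdivided into unit triangles, upward ones labeled by the degree $d-1$ monomials of $K[x,y,z]$ and downward ones by degree $d-2$ monomials: $x^{d-1}$ at the top, $y^{d-1}$ bottom-left, $z^{d-1}$ bottom-right, and an upward triangle sharing an edge with a downward one has label equal to the downward label times a variable. A subregion is a set of these unit triangles. The monomial subregion of $T$ associated to a monomial $m$ of degree $<d$ is the set of unit triangles of $T$ whose labels are divisible by $m$ (i.e., the part of $T$ inside the upward triangle located $a$ units from the bottom edge, $b$ from the upper-right edge and $c$ from the upper-left edge when $m=x^ay^bz^c$). A lozenge is a union of two unit triangles sharing an edge; a region is tileable if it is empty or some set of lozenges covers each of its unit triangles exactly once. *)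

From mathcomp Require Import all_boot.
Set Implicit Arguments. Unset Strict Implicit. Unset Printing Implicit Defensive.

(* A unit triangle of T_d: orientation (true = upward, false = downward)
   and the exponent triple (a,b,c) of its label x^a y^b z^c. *)
Definition tri (d : nat) := (bool * ('I_d * 'I_d * 'I_d))%type.

Definition ea d (t : tri d) : nat := t.2.1.1.
Definition eb d (t : tri d) : nat := t.2.1.2.
Definition ec d (t : tri d) : nat := t.2.2.

(* valid unit triangle of T_d: upward labels have degree d-1,
   downward labels degree d-2 (stated without truncated subtraction). *)
Definition is_tri d (t : tri d) : bool :=
  if t.1 then ea t + eb t + ec t + 1 == d
  else ea t + eb t + ec t + 2 == d.

Definition Td d : {set tri d} := [set t | is_tri t].

(* u is upward, w is downward, and they share an edge:
   label(u) = label(w) * (x, y or z). *)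
Definition adjacent d (u w : tri d) : bool :=
  [&& is_tri u, is_tri w, u.1, ~~ w.1 &
   [|| [&& ea u == (ea w).+1, eb u == eb w & ec u == ec w],
       [&& ea u == ea w, eb u == (eb w).+1 & ec u == ec w]
     | [&& ea u == ea w, eb u == eb w & ec u == (ec w).+1]]].

(* A lozenge is encoded as the pair (upward triangle, downward triangle). *)
Definition lozenge d := (tri d * tri d)%type.

Definition tiling d (R : {set tri d}) (L : {set lozenge d}) : Prop :=
  (forall p, p \in L -> [/\ adjacent p.1 p.2, p.1 \in R & p.2 \in R]) /\
  (forall t, t \in R -> #|[set p in L | (p.1 == t) || (p.2 == t)]| = 1).

(* tileable: empty or admits a lozenge tiling (empty case covered by L = set0). *)
Definition tileable d (R : {set tri d}) : Prop := exists L, tiling R L.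

Definition monomial_subregion d (T : {set tri d}) (a b c : nat) : {set tri d} :=
  [set t in T | [&& a <= ea t, b <= eb t & c <= ec t]].

(** No lozenge of a tiling of [T] can cross the boundary of a tileable monomial
    subregion [U]. Lozenges pair an upward with a downward triangle, and the
    upward neighbour of a downward triangle of [U] lies again in [U]. Hence the
    lozenges whose downward triangle is in [U] cover as many upward triangles
    of [U] as [U] has downward triangles; since [U] is tileable this is all of
    them, so every lozenge meeting [U] lies inside [U]. *)

From mathcomp Require Import all_boot zify.

Set Implicit Arguments.
Unset Strict Implicit.
Unset Printing Implicit Defensive.

Definition covers d (p : lozenge d) (t : tri d) := (p.1 == t) || (p.2 == t).

Definition up_closed d (R U : {set tri d}) :=
  forall u w, adjacent u w -> u \in R -> w \in U -> u \in U.

Lemma adjacent_orientation d (u w : tri d) : adjacent u w -> u.1 && ~~ w.1.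
Proof. by case/and5P=> _ _ -> ->. Qed.

Section LozengeTiling.

Variables (d : nat) (R : {set tri d}) (L : {set lozenge d}).
Hypothesis tilingRL : tiling R L.

Lemma lozenge_in_region p : p \in L -> (p.1 \in R) && (p.2 \in R).
Proof. by case: tilingRL => tiles _ /tiles[_ -> ->]. Qed.

Lemma lozenge_orientation p : p \in L -> p.1.1 && ~~ p.2.1.
Proof. by case: tilingRL => tiles _ /tiles[/adjacent_orientation]. Qed.

Lemma covering_lozenge t : t \in R -> exists2 p, p \in L & covers p t.
Proof.
case: tilingRL => _ covered /covered covered_once.
have : 0 < #|[set p in L | covers p t]| by rewrite covered_once.
by rewrite card_gt0 => /set0Pn[p]; rewrite inE => /andP[]; exists p.
Qed.

Lemma covering_lozenge_uniq t p q : t \in R -> p \in L -> q \in L ->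
  covers p t -> covers q t -> p = q.
Proof.
case: tilingRL => _ covered /covered/eqP/cards1P[r coverers] pL qL covp covq.
have : p \in [set p in L | covers p t] by rewrite inE pL.
have : q \in [set p in L | covers p t] by rewrite inE qL.
by rewrite coverers !inE => /eqP-> /eqP->.
Qed.

Lemma covers_in_region p t : p \in L -> covers p t -> t \in R.
Proof. by move=> /lozenge_in_region/andP[p1R p2R] /orP[]/eqP<-. Qed.

Lemma tiling_fst_inj : {in L &, injective (fun p : lozenge d => p.1)}.
Proof.
move=> p q pL qL epq; apply: (covering_lozenge_uniq (t := p.1)) => //.
- by case/andP: (lozenge_in_region pL).
- by rewrite /covers eqxx.
- by rewrite /covers epq eqxx.
Qed.

Lemma tiling_snd_inj : {in L &, injective (fun p : lozenge d => p.2)}.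
Proof.
move=> p q pL qL epq; apply: (covering_lozenge_uniq (t := p.2)) => //.
- by case/andP: (lozenge_in_region pL).
- by rewrite /covers eqxx orbT.
- by rewrite /covers epq eqxx orbT.
Qed.

Lemma tiling_fst_imset (S : {set tri d}) : S \subset R ->
  (fun p : lozenge d => p.1) @: [set p in L | p.1 \in S] = [set t in S | t.1].
Proof.
move=> SR; apply/setP=> t; rewrite inE; apply/imsetP/andP.
  case=> p; rewrite inE => /andP[pL pS] ->.
  by case/andP: (lozenge_orientation pL).
case=> tS tup; have [p pL] := covering_lozenge (subsetP SR t tS).
case/orP=> /eqP ept; first by exists p; rewrite // inE pL ept.
by case/andP: (lozenge_orientation pL); rewrite ept tup.
Qed.

Lemma tiling_snd_imset (S : {set tri d}) : S \subset R ->
  (fun p : lozenge d => p.2) @: [set p in L | p.2 \in S] = [set t in S | ~~ t.1].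
Proof.
move=> SR; apply/setP=> t; rewrite inE; apply/imsetP/andP.
  case=> p; rewrite inE => /andP[pL pS] ->.
  by case/andP: (lozenge_orientation pL).
case=> tS tdown; have [p pL] := covering_lozenge (subsetP SR t tS).
case/orP=> /eqP ept; last by exists p; rewrite // inE pL ept.
by case/andP: (lozenge_orientation pL); rewrite ept (negPf tdown).
Qed.

Lemma card_tiling_down (S : {set tri d}) : S \subset R ->
  #|[set p in L | p.2 \in S]| = #|[set t in S | ~~ t.1]|.
Proof.
move=> SR; rewrite -(tiling_snd_imset SR) card_in_imset //.
by move=> p q; rewrite !inE => /andP[pL _] /andP[qL _]; apply: tiling_snd_inj.
Qed.

Lemma card_tiling_up (S : {set tri d}) : S \subset R ->
  #|[set p in L | p.1 \in S]| = #|[set t in S | t.1]|.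
Proof.
move=> SR; rewrite -(tiling_fst_imset SR) card_in_imset //.
by move=> p q; rewrite !inE => /andP[pL _] /andP[qL _]; apply: tiling_fst_inj.
Qed.

End LozengeTiling.

Lemma tileable_balanced d (R : {set tri d}) :
  tileable R -> #|[set t in R | t.1]| = #|[set t in R | ~~ t.1]|.
Proof.
case=> L tilingRL.
rewrite -(card_tiling_up tilingRL (subxx R)) -(card_tiling_down tilingRL (subxx R)).
apply: eq_card => p; rewrite !inE.
case pL: (p \in L) => //=.
by case/andP: (lozenge_in_region tilingRL pL) => -> ->.
Qed.

Lemma tiling_no_crossing d (R U : {set tri d}) (L : {set lozenge d}) :
  tiling R L -> U \subset R -> up_closed R U -> tileable U ->
  {in L, forall p, (p.1 \in U) = (p.2 \in U)}.
Proof.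
move=> tilingRL UR closedU tileU.
have fst_in_U p : p \in L -> p.2 \in U -> p.1 \in U.
  case: tilingRL => tiles _ /tiles[adj p1R _]; exact: closedU adj p1R.
have down_sub_up : [set p in L | p.2 \in U] \subset [set p in L | p.1 \in U].
  by apply/subsetP=> p; rewrite !inE => /andP[pL /(fst_in_U p pL)->]; rewrite pL.
have /subset_cardP/(_ down_sub_up) down_eq_up :
    #|[set p in L | p.2 \in U]| = #|[set p in L | p.1 \in U]|.
  by rewrite (card_tiling_down tilingRL UR) (card_tiling_up tilingRL UR) tileable_balanced.
move=> p pL; apply/idP/idP; last exact: fst_in_U.
by move=> p1U; have := down_eq_up p; rewrite !inE pL p1U => /= ->.
Qed.

Lemma tiling_restrict d (R S : {set tri d}) (L : {set lozenge d}) :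
  tiling R L -> S \subset R -> {in L, forall p, (p.1 \in S) = (p.2 \in S)} ->
  tiling S [set p in L | p.1 \in S].
Proof.
move=> [tiles covered] SR no_crossing; split.
  move=> p; rewrite inE => /andP[pL p1S].
  by have [adj _ _] := tiles p pL; rewrite -no_crossing.
move=> t tS; rewrite -(covered t (subsetP SR t tS)); apply: eq_card => p.
rewrite !inE; case pL: (p \in L) => //=; apply: andb_idl => /orP[]/eqP ept.
  by rewrite ept.
by rewrite no_crossing // ept.
Qed.

Lemma tiling_setU d (R1 R2 : {set tri d}) (L1 L2 : {set lozenge d}) :
  [disjoint R1 & R2] -> tiling R1 L1 -> tiling R2 L2 ->
  tiling (R1 :|: R2) (L1 :|: L2).
Proof.
move=> disjR tiling1 tiling2.
have [[tiles1 covered1] [tiles2 covered2]] := (tiling1, tiling2); split.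
  move=> p; rewrite inE => /orP[/tiles1|/tiles2] [adj p1R p2R];
    by rewrite !inE p1R p2R ?orbT.
move=> t; rewrite inE => /orP[tR1|tR2].
  rewrite -(covered1 t tR1); apply: eq_card => p; rewrite !inE.
  case covp: ((p.1 == t) || (p.2 == t)); rewrite ?andbF // !andbT.
  case pL2: (p \in L2); rewrite ?orbF //.
  by have := covers_in_region tiling2 pL2 covp; rewrite (disjointFr disjR tR1).
rewrite -(covered2 t tR2); apply: eq_card => p; rewrite !inE.
case covp: ((p.1 == t) || (p.2 == t)); rewrite ?andbF // !andbT.
case pL1: (p \in L1) => //=.
by have := covers_in_region tiling1 pL1 covp; rewrite (disjointFl disjR tR2).
Qed.

Lemma monomial_subregion_sub d (T : {set tri d}) a b c :
  monomial_subregion T a b c \subset T.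
Proof. by apply/subsetP=> t; rewrite inE => /andP[]. Qed.

Lemma monomial_subregion_up_closed d (T : {set tri d}) a b c :
  up_closed T (monomial_subregion T a b c).
Proof.
move=> u w adj uT; rewrite !inE uT => /andP[_ /and3P[aw bw cw]].
case/and5P: adj => _ _ _ _.
by case/or3P=> /and3P[/eqP-> /eqP-> /eqP->]; apply/and3P; split; lia.
Qed.

Theorem lemma2p1 (d : nat) (T : {set tri d}) (a b c : nat) :
  0 < d -> T \subset Td d -> a + b + c < d ->
  tileable (monomial_subregion T a b c) ->
  (tileable T <-> tileable (T :\: monomial_subregion T a b c)) /\
  (forall L : {set lozenge d}, tiling T L ->
     exists L1 L2 : {set lozenge d},
       [/\ tiling (T :\: monomial_subregion T a b c) L1,
           tiling (monomial_subregion T a b c) L2 &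
           L = L1 :|: L2]).
Proof.
move=> _ _ _ tileU.
have closedU := @monomial_subregion_up_closed d T a b c.
have UT := @monomial_subregion_sub d T a b c.
set U := monomial_subregion T a b c in tileU closedU UT *.
have disjDU : [disjoint T :\: U & U].
  by rewrite -setI_eq0; apply/eqP/setP=> t; rewrite !inE andbAC andNb.
have split_tiling L : tiling T L -> exists L1 L2 : {set lozenge d},
    [/\ tiling (T :\: U) L1, tiling U L2 & L = L1 :|: L2].
  move=> tilingTL; have no_crossing := tiling_no_crossing tilingTL UT closedU tileU.
  exists [set p in L | p.1 \in T :\: U], [set p in L | p.1 \in U]; split.
  - apply: tiling_restrict (subsetDl T U) _ => // p pL.
    by rewrite !in_setD no_crossing //; case/andP: (lozenge_in_region tilingTL pL) => -> ->.
  - exact: tiling_restrict tilingTL UT no_crossing.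
  - apply/setP=> p; rewrite !inE; case pL: (p \in L) => //=.
    by case/andP: (lozenge_in_region tilingTL pL) => -> _; rewrite andbT orNb.
split; last exact: split_tiling.
split=> [[L /split_tiling[L1 [L2 [tiling1 _ _]]]] | [L1 tiling1]]; first by exists L1.
have [L2 tiling2] := tileU.
exists (L1 :|: L2); rewrite -(setID T U) (setIidPr UT) setUC.
exact: tiling_setU.
Qed.
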